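(* In the setting of the context, assume $\mathbf{A}$ and $\tilde{\mathbf{A}}$ are invertible and $\mathbf{Q}_\Delta$ is given by the LU trick. For $k\in\mathbb{N}$ let $\mathbf{T}_{\mathrm{PFASST}}(\mu,k)=\big(\mathbf{I}_{LMN}-\mathbf{T}_C^F\tilde{\mathbf{P}}^{-1}\mathbf{T}_F^C\mathbf{C}\big)\big(\mathbf{I}_{LMN}-\hat{\mathbf{P}}^{-1}\mathbf{C}\big)^k$ be the iteration matrix of PFASST with $k$ pre-smoothing steps. Then there exist constants $c>0$, $c'\ge0$ and $\mu^*>0$ such that for all $\mu\ge\mu^*$, $$\big\|\mathbf{T}_{\mathrm{PFASST}}(\mu,k)\big\|\le c\,\big\|\mathbf{I}_L\otimes(\mathbf{I}_M-\mathbf{Q}_\Delta^{-1}\mathbf{Q})^k\otimes\mathbf{I}_N\big\|+\frac{c'}{\mu}.$$ In particular, for $k\ge M$ the norm of the iteration matrix tends to zero as $\mu\to\infty$.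
   Context: Fix positive integers $L,M,N$ and coarse sizes $\tilde M\le M$, $\tilde N\le N$. $\mathbf{Q}=(q_{m,j})\in\mathbb{R}^{M\times M}$ with $q_{m,j}=\int_0^{\tau_m}\ell_j(s)\,ds$ is the collocation matrix for the (right) Gauss–Radau nodes $0<\tau_1<\dots<\tau_M=1$ on $[0,1]$. LU trick: $\mathbf{Q}^T=\mathbf{L}_Q\mathbf{U}_Q$ with $\mathbf{L}_Q$ unit lower triangular, $\mathbf{U}_Q$ upper triangular, $\mathbf{Q}_\Delta=\mathbf{U}_Q^T$. $\tilde{\mathbf{Q}}_\Delta\in\mathbb{R}^{\tilde M\times\tilde M}$ is the lower-triangular weight matrix of a simpler quadrature rule on the coarse nodes, assumed invertible (standing assumption of the stiff-limit analysis). $\mathbf{A}\in\mathbb{C}^{N\times N}$, $\tilde{\mathbf{A}}\in\mathbb{C}^{\tilde N\times\tilde N}$, $\mu>0$. $\mathbf{N}_M$, $\tilde{\mathbf{N}}_{\tilde M}$ are the $M\times M$, $\tilde M\times\tilde M$ matrices with ones in the last column and zeros elsewhere; $\mathbf{H}=\mathbf{N}_M\otimes\mathbf{I}_N$, $\tilde{\mathbf{H}}=\tilde{\mathbf{N}}_{\tilde M}\otimes\mathbf{I}_{\tilde N}$; $\mathbf{E}\in\mathbb{R}^{L\times L}$ has ones on the first subdiagonal and zeros elsewhere. $\mathbf{C}=\mathbf{I}_{LMN}-\mu\,\mathbf{I}_L\otimes\mathbf{Q}\otimes\mathbf{A}-\mathbf{E}\otimes\mathbf{H}$, $\hat{\mathbf{P}}=\mathbf{I}_{LMN}-\mu\,\mathbf{I}_L\otimes\mathbf{Q}_\Delta\otimes\mathbf{A}$,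 $\tilde{\mathbf{P}}=\mathbf{I}_{L\tilde M\tilde N}-\mu\,\mathbf{I}_L\otimes\tilde{\mathbf{Q}}_\Delta\otimes\tilde{\mathbf{A}}-\mathbf{E}\otimes\tilde{\mathbf{H}}$ (both invertible). $\mathbf{T}_F^C=\mathbf{I}_L\otimes\mathbf{T}_{F,Q}^C\otimes\mathbf{T}_{F,A}^C\in\mathbb{R}^{L\tilde M\tilde N\times LMN}$, $\mathbf{T}_C^F=\mathbf{I}_L\otimes\mathbf{T}_{C,Q}^F\otimes\mathbf{T}_{C,A}^F\in\mathbb{R}^{LMN\times L\tilde M\tilde N}$, with $(\mathbf{E}\otimes\tilde{\mathbf{H}})\mathbf{T}_F^C=\mathbf{T}_F^C(\mathbf{E}\otimes\mathbf{H})$. $\|\cdot\|$ is any induced matrix norm. *)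

From HB Require Import structures.
From mathcomp Require Import all_boot all_order all_algebra.
From mathcomp Require Import all_classical all_reals all_analysis.
From mathcomp Require Import complex mxtens.
Set Implicit Arguments. Unset Strict Implicit. Unset Printing Implicit Defensive.
Import Order.TTheory GRing.Theory Num.Theory.
Local Open Scope ring_scope.
Local Open Scope classical_set_scope.

Section PFASST.
Variable R : realType.
Local Notation C := (R[i]).

Definition lagrange (M : nat) (tau : 'I_M -> R) (j : 'I_M) : {poly R} :=
  \prod_(i < M | i != j) (('X - (tau i)%:P) * ((tau j - tau i)^-1)%:P).

Definition pint (p : {poly R}) (t : R) : R :=
  \sum_(i < size p) p`_i * t ^+ i.+1 / (i.+1)%:R.

(* tau_1 < ... < tau_M are the right Gauss-Radau nodes on [0,1]:
   increasing, in (0,1], tau_M = 1, and the interpolatory quadrature rule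
   on them (weights int_0^1 l_j) is exact for all polynomials of degree
   <= 2M-2 (the defining property of Radau quadrature). *)
Definition right_radau_nodes (M : nat) (tau : 'I_M -> R) : Prop :=
  [/\ forall i j : 'I_M, (i < j)%N -> tau i < tau j,
      forall i : 'I_M, 0 < tau i,
      forall i : 'I_M, val i = M.-1 -> tau i = 1
    & forall p : {poly R}, (size p <= (2 * M).-1)%N ->
        pint p 1 = \sum_(j < M) pint (lagrange tau j) 1 * p.[tau j]].

Definition collocQ (M : nat) (tau : 'I_M -> R) : 'M[R]_M :=
  \matrix_(m < M, j < M) pint (lagrange tau j) (tau m).

Definition lower_triangular (n : nat) (A : 'M[R]_n) : Prop :=
  forall i j : 'I_n, (i < j)%N -> A i j = 0.
Definition upper_triangular (n : nat) (A : 'M[R]_n) : Prop :=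
  forall i j : 'I_n, (j < i)%N -> A i j = 0.
Definition unit_lower_triangular (n : nat) (A : 'M[R]_n) : Prop :=
  lower_triangular A /\ forall i, A i i = 1.

Definition LU_trick (M : nat) (Q QD : 'M[R]_M) : Prop :=
  exists LQ UQ : 'M[R]_M,
    [/\ unit_lower_triangular LQ, upper_triangular UQ,
        Q^T = LQ *m UQ & QD = UQ^T].

Definition cmx (m n : nat) (A : 'M[R]_(m, n)) : 'M[C]_(m, n) :=
  map_mx (fun x : R => (x%:C)%C) A.

Definition lastcol (M : nat) : 'M[C]_M :=
  \matrix_(i < M, j < M) (if val j == M.-1 then 1 else 0).

Definition subdiagE (L : nat) : 'M[C]_L :=
  \matrix_(i < L, j < L) (if val i == (val j).+1 then 1 else 0).

Definition Hmat (M N : nat) : 'M[C]_(M * N) := lastcol M *t (1%:M : 'M[C]_N).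

Definition mxpow (n : nat) (A : 'M[C]_n) (k : nat) : 'M[C]_n :=
  iter k (fun B => A *m B) 1%:M.

Definition Cmat (L M N : nat) (Q : 'M[R]_M) (A : 'M[C]_N) (mu : R)
  : 'M[C]_(L * (M * N)) :=
  1%:M - (mu%:C)%C *: ((1%:M : 'M[C]_L) *t (cmx Q *t A))
       - subdiagE L *t Hmat M N.

Definition Phat (L M N : nat) (QD : 'M[R]_M) (A : 'M[C]_N) (mu : R)
  : 'M[C]_(L * (M * N)) :=
  1%:M - (mu%:C)%C *: ((1%:M : 'M[C]_L) *t (cmx QD *t A)).

Definition Ptilde (L Mt Nt : nat) (QtD : 'M[R]_Mt) (At : 'M[C]_Nt) (mu : R)
  : 'M[C]_(L * (Mt * Nt)) :=
  1%:M - (mu%:C)%C *: ((1%:M : 'M[C]_L) *t (cmx QtD *t At))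
       - subdiagE L *t Hmat Mt Nt.

Definition TFC (L M N Mt Nt : nat) (TQ : 'M[R]_(Mt, M)) (TA : 'M[R]_(Nt, N))
  : 'M[C]_(L * (Mt * Nt), L * (M * N)) :=
  (1%:M : 'M[C]_L) *t (cmx TQ *t cmx TA).

Definition TCF (L M N Mt Nt : nat) (TQ : 'M[R]_(M, Mt)) (TA : 'M[R]_(N, Nt))
  : 'M[C]_(L * (M * N), L * (Mt * Nt)) :=
  (1%:M : 'M[C]_L) *t (cmx TQ *t cmx TA).

Definition T_PFASST (L M N Mt Nt : nat) (Q QD : 'M[R]_M) (A : 'M[C]_N)
  (QtD : 'M[R]_Mt) (At : 'M[C]_Nt)
  (TFCQ : 'M[R]_(Mt, M)) (TFCA : 'M[R]_(Nt, N))
  (TCFQ : 'M[R]_(M, Mt)) (TCFA : 'M[R]_(N, Nt)) (mu : R) (k : nat)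
  : 'M[C]_(L * (M * N)) :=
  (1%:M - TCF L TCFQ TCFA *m invmx (Ptilde L QtD At mu)
            *m TFC L TFCQ TFCA *m Cmat L Q A mu)
  *m mxpow (1%:M - invmx (Phat L QD A mu) *m Cmat L Q A mu) k.

Definition cabs (z : C) : R := @complex.Re R `|z|.

Definition vector_norm (n : nat) (nu : 'cV[C]_n -> R) : Prop :=
  [/\ forall x, nu x = 0 -> x = 0,
      forall (a : C) x, nu (a *: x) = cabs a * nu x
    & forall x y, nu (x + y) <= nu x + nu y].

Definition opnorm (n : nat) (nu : 'cV[C]_n -> R) (A : 'M[C]_n) : R :=
  sup [set nu (A *m x) / nu x | x in [set x : 'cV[C]_n | x != 0]].

End PFASST.

From Pilot Require Import Defs.
From HB Require Import structures.
From mathcomp Require Import all_boot all_order all_algebra.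
From mathcomp Require Import all_classical all_reals all_analysis.
From mathcomp Require Import complex mxtens.
From mathcomp Require Import ring lra zify.
Set Implicit Arguments. Unset Strict Implicit. Unset Printing Implicit Defensive.
Import Order.TTheory GRing.Theory Num.Theory.
Import numFieldNormedType.Exports.
Local Open Scope ring_scope.
Local Open Scope classical_set_scope.

(* Write P^ = I - mu G with G = I_L (x) Q_Delta (x) A invertible: for large mu,
   ||P^^-1|| = O(1/mu), and similarly ||P~^-1|| = O(1/mu).  The smoother satisfies
   I - P^^-1 C = X + P^^-1 (E (x) H - X) with X = I_L (x) (I - Q_Delta^-1 Q) (x) I_N, so its
   k-th power is X^k + O(1/mu).  The coarse-grid correction I - T P~^-1 T C stays bounded,
   the O(1/mu) of P~^-1 compensating the growth of C like mu.  All constants come from the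
   equivalence of norms on C^n.  Finally the LU trick gives Q = Q_Delta L_Q^T, so
   I - Q_Delta^-1 Q = I - L_Q^T is strictly upper triangular and X^k = 0 once k >= M. *)

Lemma cvgy0_le_inv (R : realType) (f : R -> R) (K : R) :
  (\forall x \near +oo, 0 <= f x <= K / x) -> f x @[x --> +oo] --> 0.
Proof.
move=> f_bd; apply/cvgrPdist_lt => e e0; near=> x.
have /andP[f0 fK] : 0 <= f x <= K / x by near: x.
rewrite sub0r normrN ger0_norm //; apply: le_lt_trans fK _.
have x0 : 0 < x by near: x; apply: nbhs_pinfty_gt; rewrite num_real.
have xK : `|K| / e < x by near: x; apply: nbhs_pinfty_gt; rewrite num_real.
rewrite ltr_pdivrMr //; move: xK; rewrite ltr_pdivrMr // => xK.
by have := ler_norm K; nra.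
Unshelve. all: by end_near. Qed.

Section ComplexModulus.
Variable R : realType.

Lemma normcE (z : R[i]) : `|z| = ((cabs z)%:C)%C.
Proof. by rewrite /cabs normc_def. Qed.

Lemma cabs_real (r : R) : cabs (r%:C)%C = `|r|.
Proof. by rewrite /cabs normc_def /= expr0n /= addr0 sqrtr_sqr. Qed.

Lemma cabs_ge0 (z : R[i]) : 0 <= cabs z.
Proof. by rewrite /cabs normc_def /= sqrtr_ge0. Qed.

Lemma cabsM (a b : R[i]) : cabs (a * b) = cabs a * cabs b.
Proof. by rewrite {1}/cabs normrM !normcE -rmorphM. Qed.

Lemma cabsD (a b : R[i]) : cabs (a + b) <= cabs a + cabs b.
Proof. by have := ler_normD a b; rewrite !normcE -rmorphD lecR. Qed.

Lemma cabs_eq0 (a : R[i]) : cabs a = 0 -> a = 0.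
Proof. by move=> h; apply/eqP; rewrite -normr_eq0 normcE h. Qed.

End ComplexModulus.

Section VectorNorm.
Variables (R : realType) (n : nat) (nu : 'cV[R[i]]_n -> R).
Hypothesis nu_norm : vector_norm nu.

Lemma vnormZr (r : R) x : nu ((r%:C)%C *: x) = `|r| * nu x.
Proof. by case: nu_norm => _ h _; rewrite h cabs_real. Qed.

Lemma vnormD x y : nu (x + y) <= nu x + nu y.
Proof. by case: nu_norm. Qed.

Lemma vnorm0 : nu 0 = 0.
Proof. by have := vnormZr 0 0; rewrite scaler0 normr0 mul0r. Qed.

Lemma vnormN x : nu (- x) = nu x.
Proof. by have := vnormZr (-1) x; rewrite rmorphN1 scaleN1r normrN1 mul1r. Qed.

Lemma vnorm_ge0 x : 0 <= nu x.
Proof. by have := vnormD x (- x); rewrite subrr vnorm0 vnormN; lra. Qed.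

Lemma vnorm_gt0 x : x != 0 -> 0 < nu x.
Proof.
move=> x_neq0; rewrite lt_def vnorm_ge0 andbT; apply: contraNneq x_neq0.
by case: nu_norm => nu_eq0 _ _ /nu_eq0 ->.
Qed.

Lemma vnorm_sum (I : Type) (r : seq I) (P : pred I) (F : I -> 'cV[R[i]]_n) :
  nu (\sum_(i <- r | P i) F i) <= \sum_(i <- r | P i) nu (F i).
Proof.
elim/big_ind2 : _ => [|a b c d hac hbd|//]; first by rewrite vnorm0.
exact: le_trans (vnormD _ _) (lerD hac hbd).
Qed.

End VectorNorm.

Section RealCoordinates.
Variables (R : realType) (n : nat).

Definition ri_coords (x : 'cV[R[i]]_n) : 'rV[R]_(n + n) :=
  row_mx (\row_i complex.Re (x i 0)) (\row_i complex.Im (x i 0)).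

Definition of_ri_coords (y : 'rV[R]_(n + n)) : 'cV[R[i]]_n :=
  \col_i (lsubmx y 0 i +i* rsubmx y 0 i)%C.

Lemma ri_coordsK : cancel ri_coords of_ri_coords.
Proof.
move=> x; apply/matrixP => i j; rewrite [j]ord1 mxE row_mxKl row_mxKr !mxE.
by case: (x i 0).
Qed.

Lemma of_ri_coordsK : cancel of_ri_coords ri_coords.
Proof.
move=> y; rewrite -[RHS]hsubmxK; congr row_mx; apply/rowP => i; rewrite !mxE //.
Qed.

Lemma ri_coords0 : ri_coords 0 = 0.
Proof. by rewrite /ri_coords -row_mx0; congr row_mx; apply/rowP => i; rewrite !mxE. Qed.

Lemma of_ri_coordsB y z : of_ri_coords (y - z) = of_ri_coords y - of_ri_coords z.
Proof. by apply/matrixP => i j; rewrite !mxE. Qed.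

Lemma of_ri_coordsZ a y : of_ri_coords (a *: y) = (a%:C)%C *: of_ri_coords y.
Proof.
apply/matrixP => i j; rewrite !mxE /=; apply/eqP; rewrite eq_complex /=.
by apply/andP; split; apply/eqP; ring.
Qed.

Lemma mx_norm_entry m k (y : 'M[R]_(m, k)) i j : `|y i j| <= `|y|.
Proof.
rewrite [`|y|]mx_normrE.
exact: (le_bigmax _ (fun ij : 'I_m * 'I_k => `|y ij.1 ij.2|) (i, j)).
Qed.

Lemma norm_Re_le_ri_coords (x : 'cV[R[i]]_n) i : `|complex.Re (x i 0)| <= `|ri_coords x|.
Proof. by have := mx_norm_entry (ri_coords x) 0 (lshift n i); rewrite row_mxEl mxE. Qed.

Lemma norm_Im_le_ri_coords (x : 'cV[R[i]]_n) i : `|complex.Im (x i 0)| <= `|ri_coords x|.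
Proof. by have := mx_norm_entry (ri_coords x) 0 (rshift n i); rewrite row_mxEr mxE. Qed.

End RealCoordinates.

Section NormEquivalence.
Variables (R : realType) (p n : nat) (nu : 'cV[R[i]]_p -> R).
Hypothesis nu_norm : vector_norm nu.

Definition column_weight (A : 'M[R[i]]_(p, n)) : R :=
  \sum_i (nu (A *m delta_mx i 0) + nu (A *m ('i%C *: delta_mx i 0))).

Lemma column_weight_ge0 A : 0 <= column_weight A.
Proof. by apply: sumr_ge0 => i _; apply: addr_ge0; apply: vnorm_ge0. Qed.

Lemma vnorm_mulmx_le A x : nu (A *m x) <= `|ri_coords x| * column_weight A.
Proof.
have x_sum : x = \sum_i ((complex.Re (x i 0))%:C%C *: delta_mx i 0
             + (complex.Im (x i 0))%:C%C *: ('i%C *: delta_mx i 0)).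
  rewrite {1}(matrix_sum_delta x); apply: eq_bigr => i _.
  rewrite big_ord1 scalerA -scalerDl; congr (_ *: _).
  by rewrite {1}[x i 0]complexE mulrC.
rewrite {1}x_sum mulmx_sumr /column_weight mulr_sumr.
apply: le_trans (vnorm_sum nu_norm _ _ _) (ler_sum _ _) => i _.
rewrite mulmxDr -!scalemxAr mulrDr; apply: le_trans (vnormD nu_norm _ _) _.
rewrite !(vnormZr nu_norm); apply: lerD; apply: ler_wpM2r; try exact: vnorm_ge0.
  exact: norm_Re_le_ri_coords.
exact: norm_Im_le_ri_coords.
Qed.

End NormEquivalence.

Section NormLowerBound.
Variables (R : realType) (n : nat) (nu : 'cV[R[i]]_n -> R).
Hypotheses (nu_norm : vector_norm nu) (n_gt0 : (0 < n)%N).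

Lemma vnorm_of_ri_coords_lipschitz y z :
  `|nu (of_ri_coords y) - nu (of_ri_coords z)| <= `|y - z| * column_weight nu 1.
Proof.
have bound u v : nu (of_ri_coords u - of_ri_coords v) <= `|u - v| * column_weight nu 1.
  by rewrite -of_ri_coordsB; have := vnorm_mulmx_le nu_norm 1 (of_ri_coords (u - v));
    rewrite mul1mx of_ri_coordsK.
have tri u v :
    nu (of_ri_coords u) <= nu (of_ri_coords v) + nu (of_ri_coords u - of_ri_coords v).
  have := vnormD nu_norm (of_ri_coords v) (of_ri_coords u - of_ri_coords v).
  by rewrite addrC subrK.
have := bound y z; have := bound z y; rewrite distrC.
by have := tri y z; have := tri z y; rewrite ler_norml; lra.
Qed.

Lemma vnorm_of_ri_coords_continuous : continuous (nu \o @of_ri_coords R n).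
Proof.
move=> y; apply/(@cvgrPdist_lt _ _ _ (nbhs y)) => e e0.
have w0 := column_weight_ge0 nu_norm 1.
apply/(@nbhs_normP R [the pseudoMetricNormedZmodType R of 'rV[R]_(n + n)] y).
exists (e / (column_weight nu 1 + 1)) => /=; first by apply: divr_gt0; lra.
move=> z /= yz; apply: le_lt_trans (vnorm_of_ri_coords_lipschitz y z) _.
apply: (@le_lt_trans _ _ (e / (column_weight nu 1 + 1) * column_weight nu 1)).
  exact/ler_wpM2r/ltW.
by rewrite mulrAC ltr_pdivrMr; nra.
Qed.

(* [c] is the minimum of [nu] over the compact unit sphere in real coordinates. *)
Lemma vnorm_lower_bound : exists2 c, 0 < c & forall x, c * `|ri_coords x| <= nu x.
Proof.
pose S := [set y : 'rV[R]_(n + n) | `|y| = 1].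
pose y1 : 'rV[R]_(n + n) := const_mx 1.
have y1_neq0 : y1 != 0.
  apply/negP => /eqP /matrixP /(_ 0 (lshift n (Ordinal n_gt0))) /eqP.
  by rewrite !mxE oner_eq0.
have S0 : S !=set0.
  exists (`|y1|^-1 *: y1); rewrite /S /= normrZ ger0_norm ?invr_ge0 //.
  by rewrite mulVf // normr_eq0.
have S_compact : compact S.
  apply: bounded_closed_compact; first by exists 1; split => // r r1 y /= ->; exact: ltW.
  have -> : S = (Num.norm : 'rV[R]_(n + n) -> R) @^-1` [set r | r = 1] by [].
  by apply: preimage_closed; [move=> y _; exact: norm_continuous | exact: closed_eq].
have [c Sc cmin] := EVT_min_rV S0 S_compact
  (fun y => @continuous_subspaceT _ _ _ _ vnorm_of_ri_coords_continuous y).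
move: Sc; rewrite inE /S /= => c1.
exists (nu (of_ri_coords c)).
  rewrite (vnorm_gt0 nu_norm) //; apply/eqP => c0; move: c1.
  by rewrite -(of_ri_coordsK c) c0 ri_coords0 normr0 => /esym/eqP; rewrite oner_eq0.
move=> x; have [->|x_neq0] := eqVneq (ri_coords x) 0.
  by rewrite normr0 mulr0 vnorm_ge0.
have xpos : 0 < `|ri_coords x| by rewrite normr_gt0.
have := cmin (`|ri_coords x|^-1 *: ri_coords x).
rewrite inE /S /= normrZ normfV normr_id mulVf ?gt_eqF // => /(_ erefl) /=.
rewrite of_ri_coordsZ ri_coordsK (vnormZr nu_norm) ger0_norm ?invr_ge0 //.
by rewrite -ler_pdivlMr // mulrC.
Qed.

End NormLowerBound.

Definition opbound (R : realType) (p q : nat)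
    (nup : 'cV[R[i]]_p -> R) (nuq : 'cV[R[i]]_q -> R) (A : 'M[R[i]]_(p, q)) (K : R) :=
  forall x, nup (A *m x) <= K * nuq x.

Section OperatorBound.
Variables (R : realType) (p q r : nat).
Variables (nup : 'cV[R[i]]_p -> R) (nuq : 'cV[R[i]]_q -> R) (nur : 'cV[R[i]]_r -> R).
Hypotheses (nup_norm : vector_norm nup) (nuq_norm : vector_norm nuq).

Lemma exists_opbound (A : 'M[R[i]]_(p, q)) :
  (0 < q)%N -> exists2 K, 0 <= K & opbound nup nuq A K.
Proof.
move=> q_gt0; have [c c_gt0 lower] := vnorm_lower_bound nuq_norm q_gt0.
have w0 := column_weight_ge0 nup_norm A.
exists (column_weight nup A / c); first exact: divr_ge0 w0 (ltW c_gt0).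
move=> x; apply: le_trans (vnorm_mulmx_le nup_norm A x) _.
rewrite mulrC mulrAC -mulrA ler_wpM2l // ler_pdivlMr // mulrC; exact: lower.
Qed.

Lemma opboundM (A : 'M[R[i]]_(p, q)) (B : 'M[R[i]]_(q, r)) a b :
  0 <= a -> opbound nup nuq A a -> opbound nuq nur B b -> opbound nup nur (A *m B) (a * b).
Proof.
move=> a0 hA hB x; rewrite -mulmxA -mulrA; apply: le_trans (hA _) _.
exact: ler_wpM2l.
Qed.

Lemma opbound_le (A : 'M[R[i]]_(p, q)) a b :
  a <= b -> opbound nup nuq A a -> opbound nup nuq A b.
Proof.
by move=> ab hA x; apply: le_trans (hA x) _; apply: ler_wpM2r; rewrite ?vnorm_ge0.
Qed.

Lemma opboundD (A B : 'M[R[i]]_(p, q)) a b :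
  opbound nup nuq A a -> opbound nup nuq B b -> opbound nup nuq (A + B) (a + b).
Proof.
move=> hA hB x; rewrite mulmxDl mulrDl.
exact: le_trans (vnormD nup_norm _ _) (lerD (hA x) (hB x)).
Qed.

Lemma opboundN (A : 'M[R[i]]_(p, q)) a : opbound nup nuq A a -> opbound nup nuq (- A) a.
Proof. by move=> hA x; rewrite mulNmx vnormN. Qed.

Lemma opboundB (A B : 'M[R[i]]_(p, q)) a b :
  opbound nup nuq A a -> opbound nup nuq B b -> opbound nup nuq (A - B) (a + b).
Proof. by move=> hA /opboundN; apply: opboundD. Qed.

Lemma opboundZr (A : 'M[R[i]]_(p, q)) a (c : R) :
  opbound nup nuq A a -> opbound nup nuq ((c%:C)%C *: A) (`|c| * a).
Proof. by move=> hA x; rewrite -scalemxAl vnormZr // -mulrA ler_wpM2l. Qed.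

Lemma opbound0 a : 0 <= a -> opbound nup nuq 0 a.
Proof. by move=> a0 x; rewrite mul0mx vnorm0 // mulr_ge0 // vnorm_ge0. Qed.

Lemma vnorm_le_mulmx_linv (G : 'M[R[i]]_(q, p)) (B : 'M[R[i]]_(p, q)) :
  (0 < q)%N -> B *m G = 1%:M -> exists2 K, 0 <= K & forall x, nup x <= K * nuq (G *m x).
Proof.
move=> q_gt0 BG1; have [K K0 hB] := exists_opbound B q_gt0.
by exists K => // x; have := hB (G *m x); rewrite mulmxA BG1 mul1mx.
Qed.

End OperatorBound.

Lemma opbound1 (R : realType) p (nu : 'cV[R[i]]_p -> R) : opbound nu nu 1%:M 1.
Proof. by move=> x; rewrite mul1mx mul1r. Qed.

Section OperatorNorm.
Variables (R : realType) (n : nat) (nu : 'cV[R[i]]_n -> R).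
Hypotheses (nu_norm : vector_norm nu) (n_gt0 : (0 < n)%N).

Let e0 : 'cV[R[i]]_n := delta_mx (Ordinal n_gt0) 0.

Let e0_neq0 : e0 != 0.
Proof.
apply/negP => /eqP/matrixP/(_ (Ordinal n_gt0) 0).
by rewrite !mxE !eqxx => /eqP; rewrite oner_eq0.
Qed.

Let ratio_set (A : 'M[R[i]]_n) := [set nu (A *m x) / nu x | x in [set x | x != 0]].

Lemma opnorm_le_opbound A K : 0 <= K -> opbound nu nu A K -> opnorm nu A <= K.
Proof.
move=> K0 hA; apply: ge_sup; first by exists (nu (A *m e0) / nu e0), e0.
move=> _ [x /= x_neq0 <-]; rewrite ler_pdivrMr ?(vnorm_gt0 nu_norm) //; exact: hA.
Qed.

Lemma opbound_opnorm A : opbound nu nu A (opnorm nu A).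
Proof.
move=> x; have [->|x_neq0] := eqVneq x 0; first by rewrite mulmx0 !vnorm0 // mulr0.
have [K K0 hK] := exists_opbound nu_norm nu_norm A n_gt0.
have ratio_sup : has_sup (ratio_set A).
  split; first by exists (nu (A *m e0) / nu e0), e0.
  exists K => _ [y /= y_neq0 <-]; rewrite ler_pdivrMr ?(vnorm_gt0 nu_norm) //; exact: hK.
have := sup_upper_bound ratio_sup (ex_intro2 _ _ x x_neq0 erefl).
by rewrite ler_pdivrMr ?(vnorm_gt0 nu_norm).
Qed.

Lemma opnorm_ge0 A : 0 <= opnorm nu A.
Proof.
have := opbound_opnorm A e0; have := vnorm_gt0 nu_norm e0_neq0.
move=> e0_gt0 /(le_trans (vnorm_ge0 nu_norm _)); by rewrite pmulr_lge0.
Qed.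

Lemma opnorm0 : opnorm nu 0 = 0.
Proof.
apply/eqP; rewrite eq_le opnorm_ge0 andbT.
exact: opnorm_le_opbound (lexx 0) (opbound0 nu_norm nu_norm (lexx 0)).
Qed.

End OperatorNorm.

(* An auxiliary norm on the coarse space, in which [P~^-1] is bounded. *)
Definition l1norm (R : realType) n (z : 'cV[R[i]]_n) : R := \sum_i cabs (z i 0).

Lemma l1norm_vector_norm (R : realType) n : vector_norm (@l1norm R n).
Proof.
split.
- move=> z /eqP; rewrite /l1norm psumr_eq0 => [/allP z0|i _]; last exact: cabs_ge0.
  apply/matrixP => i j; rewrite [j]ord1 mxE; apply: cabs_eq0.
  by apply/eqP/z0; rewrite mem_index_enum.
- by move=> a z; rewrite /l1norm mulr_sumr; apply: eq_bigr => i _; rewrite mxE cabsM.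
- move=> x y; rewrite /l1norm -big_split /=; apply: ler_sum => i _; rewrite mxE.
  exact: cabsD.
Qed.

Section Primitive.
Variable R : realType.

(* A primitive of [p] only when [size p <= n]: higher coefficients are dropped. *)
Definition primitive (n : nat) (p : {poly R}) : {poly R} :=
  \poly_(i < n.+1) (if i is k.+1 then p`_k / k.+1%:R else 0).

Lemma pint_primitive n (p : {poly R}) (t : R) :
  (size p <= n)%N -> pint p t = (primitive n p).[t].
Proof.
move=> size_p; rewrite horner_poly big_ord_recl /= mul0r add0r /pint.
rewrite (big_ord_widen n (fun i => p`_i * t ^+ i.+1 / i.+1%:R) size_p) big_mkcond /=.
apply: eq_bigr => i _; rewrite /bump leq0n add1n add0n.
case: ifP => hi; first by rewrite mulrAC.
by rewrite nth_default ?mul0r // leqNgt hi.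
Qed.

Lemma primitive0 n (p : {poly R}) : (primitive n p).[0] = 0.
Proof. by rewrite horner_coef0 coef_poly. Qed.

Lemma primitive_sum n (I : finType) (v : I -> R) (F : I -> {poly R}) :
  primitive n (\sum_j v j *: F j) = \sum_j v j *: primitive n (F j).
Proof.
apply/polyP => k; rewrite coef_sum coef_poly.
under [RHS]eq_bigr do rewrite coefZ coef_poly.
case: ifP => hk; last by rewrite big1 // => j _; rewrite mulr0.
case: k hk => [|k] hk; first by rewrite big1 // => j _; rewrite mulr0.
by rewrite coef_sum mulr_suml; apply: eq_bigr => j _; rewrite coefZ mulrA.
Qed.

Lemma primitive_eq0 n (p : {poly R}) : (size p <= n)%N -> primitive n p = 0 -> p = 0.
Proof.
move=> size_p P0; apply/polyP => k; rewrite coef0.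
have [k_lt_n|n_le_k] := ltnP k n; last exact/nth_default/(leq_trans size_p).
have /eqP := congr1 (fun q : {poly R} => q`_k.+1) P0.
by rewrite coef_poly ltnS k_lt_n coef0 mulf_eq0 invr_eq0 pnatr_eq0 orbF => /eqP.
Qed.

End Primitive.

Lemma incr_inj (R : realType) M (tau : 'I_M -> R) :
  (forall i j : 'I_M, (i < j)%N -> tau i < tau j) -> injective tau.
Proof.
move=> tau_incr i j tau_ij; apply: val_inj.
by case: (ltngtP i j) => // /tau_incr; rewrite tau_ij ltxx.
Qed.

Section CollocationMatrix.
Variables (R : realType) (M : nat) (tau : 'I_M -> R).
Hypotheses (tau_inj : injective tau) (tau_neq0 : forall i, tau i != 0).

Let tau_neq i j : i != j -> tau j - tau i != 0.
Proof. by rewrite subr_eq0 eq_sym; apply: contra => /eqP /tau_inj ->. Qed.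

Lemma lagrange_node (j m : 'I_M) : (Defs.lagrange tau j).[tau m] = (j == m)%:R.
Proof.
rewrite /Defs.lagrange horner_prod; have [<-|jm] := eqVneq j m.
  by apply: big1 => i ij; rewrite hornerM hornerXsubC hornerC mulfV // tau_neq // eq_sym.
rewrite (bigD1 m) /=; last by rewrite eq_sym.
by rewrite hornerM hornerXsubC subrr !mul0r.
Qed.

Lemma size_lagrange j : (size (Defs.lagrange tau j) <= M)%N.
Proof.
have factor_neq0 i : i != j -> ('X - (tau i)%:P) * (tau j - tau i)^-1%:P != 0.
  by move=> ij; rewrite mulf_neq0 ?polyXsubC_eq0 // polyC_eq0 invr_eq0 tau_neq // eq_sym.
rewrite (size_prod factor_neq0) (eq_bigr (fun _ => 2%N)); last first.
  move=> i ij; rewrite size_mul ?polyXsubC_eq0 ?size_XsubC ?size_polyC //.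
    by rewrite invr_eq0 tau_neq // eq_sym.
  by rewrite polyC_eq0 invr_eq0 tau_neq // eq_sym.
by rewrite sum_nat_const cardC1 card_ord; have := ltn_ord j; lia.
Qed.

(* [v] in the left kernel of [Q] makes [P := int_0 sum_j v_j l_j] vanish at 0 and at
   every node, i.e. at [M + 1] points, while [size P <= M + 1]. *)
Lemma collocQ_unit : collocQ tau \in unitmx.
Proof.
rewrite -unitmx_tr -row_free_unit; apply/inj_row_free => v vQ0.
pose p := \sum_j v 0 j *: Defs.lagrange tau j.
have size_p : (size p <= M)%N.
  apply: (leq_trans (size_sum _ _ _)); apply/bigmax_leqP => j _.
  exact: leq_trans (size_scale_leq _ _) (size_lagrange j).
pose P := primitive M p.
have P_nodes m : P.[tau m] = 0.
  have := congr1 (fun A : 'M[R]_(1, M) => A 0 m) vQ0; rewrite !mxE => <-.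
  rewrite /P /p primitive_sum horner_sum; apply: eq_bigr => j _.
  by rewrite hornerZ -pint_primitive ?size_lagrange // !mxE.
have P0 : P = 0.
  apply: (@roots_geq_poly_eq0 _ _ (0 :: [seq tau m | m <- enum 'I_M])).
  - by rewrite /= rootE primitive0 eqxx; apply/allP => _ /mapP[m _ ->]; apply/rootP.
  - rewrite /= map_inj_uniq ?enum_uniq // andbT.
    by apply/mapP => -[m _ /esym/eqP]; rewrite (negbTE (tau_neq0 m)).
  - by rewrite /= size_map size_enum_ord; exact: size_poly.
have p0 : p = 0 by exact: primitive_eq0 size_p P0.
apply/rowP => m; rewrite mxE.
have := congr1 (fun q : {poly R} => q.[tau m]) p0; rewrite /p horner_sum horner0 => <-.
rewrite (bigD1 m) //= hornerZ lagrange_node eqxx mulr1 big1 ?addr0 // => j jm.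
by rewrite hornerZ lagrange_node (negbTE jm) mulr0.
Qed.

End CollocationMatrix.

Section MatrixAlgebra.
Variable R : realType.

Lemma cmxM m n p (A : 'M[R]_(m, n)) (B : 'M[R]_(n, p)) : cmx (A *m B) = cmx A *m cmx B.
Proof.
apply/matrixP => i j; rewrite !mxE rmorph_sum; apply: eq_bigr => k _.
by rewrite !mxE rmorphM.
Qed.

Lemma cmx1 n : cmx (1%:M : 'M[R]_n) = 1%:M.
Proof. by apply/matrixP => i j; rewrite !mxE; case: eqP. Qed.

Lemma tensmx11 m k : (1%:M : 'M[R[i]]_m) *t (1%:M : 'M[R[i]]_k) = 1%:M.
Proof.
apply/matrixP => a b.
case: (mxtens_indexP a) => a1 a2; case: (mxtens_indexP b) => b1 b2.
by rewrite tensmxE !mxE -natrM mulnb (can_eq (@mxtens_indexK _ _)) xpair_eqE.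
Qed.

Lemma tensmxBl m1 n1 m2 n2 (A B : 'M[R[i]]_(m1, n1)) (D : 'M[R[i]]_(m2, n2)) :
  (A - B) *t D = A *t D - B *t D.
Proof. by apply/matrixP => a b; rewrite !mxE mulrBl. Qed.

Lemma tensmxBr m1 n1 m2 n2 (A : 'M[R[i]]_(m1, n1)) (B D : 'M[R[i]]_(m2, n2)) :
  A *t (B - D) = A *t B - A *t D.
Proof. by apply/matrixP => a b; rewrite !mxE mulrBr. Qed.

Lemma tens_cmx_mulVmx L M N (Q : 'M[R]_M) (A : 'M[R[i]]_N) :
  Q \in unitmx -> A \in unitmx ->
  ((1%:M : 'M[R[i]]_L) *t (cmx (invmx Q) *t invmx A)) *m (1%:M *t (cmx Q *t A)) = 1%:M.
Proof. by move=> Qu Au; rewrite !tensmx_mul -cmxM !mulVmx // cmx1 mul1mx !tensmx11. Qed.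

Lemma mxpowS n (A : 'M[R[i]]_n) k : mxpow A k.+1 = A *m mxpow A k.
Proof. by []. Qed.

Lemma mxpow_tens1 L M N (Y : 'M[R[i]]_M) k :
  mxpow ((1%:M : 'M[R[i]]_L) *t (Y *t (1%:M : 'M[R[i]]_N))) k
  = (1%:M : 'M[R[i]]_L) *t (mxpow Y k *t (1%:M : 'M[R[i]]_N)).
Proof.
elim: k => [|k IHk]; first by rewrite /mxpow /= !tensmx11.
by rewrite !mxpowS IHk !tensmx_mul !mul1mx.
Qed.

Lemma mxpow_strict_upper_eq0 n (Y : 'M[R[i]]_n) :
  (forall i j : 'I_n, (j <= i)%N -> Y i j = 0) ->
  forall k (i j : 'I_n), (j < i + k)%N -> mxpow Y k i j = 0.
Proof.
move=> Y_upper; elim=> [|k IHk] i j ji.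
  by rewrite mxE; case: eqP => // ij; move: ji; rewrite ij addn0 ltnn.
rewrite mxpowS mxE big1 // => l _.
have [li|il] := leqP l i; first by rewrite Y_upper // mul0r.
by rewrite IHk ?mulr0 //; lia.
Qed.

Lemma LU_trick_unit M (Q QD : 'M[R]_M) :
  LU_trick Q QD -> Q \in unitmx -> QD \in unitmx.
Proof.
case=> LQ [UQ [_ _ QLU ->]]; rewrite unitmx_tr -[Q]trmxK unitmx_tr QLU unitmx_mul.
by case/andP.
Qed.

Lemma LU_trick_mxpow_eq0 M (Q QD : 'M[R]_M) k :
  LU_trick Q QD -> QD \in unitmx -> (M <= k)%N ->
  mxpow (1%:M - cmx (invmx QD *m Q)) k = 0.
Proof.
case=> LQ [UQ [[LQ_lower LQ_diag] _ QLU QDU]] QDu Mk.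
have -> : Q = QD *m LQ^T by rewrite QDU -trmx_mul -QLU trmxK.
rewrite mulKmx //; apply/matrixP => i j; rewrite mxE.
apply: mxpow_strict_upper_eq0; last by have := ltn_ord j; lia.
move=> a b; rewrite leq_eqVlt => /predU1P[ba|ba]; rewrite !mxE.
  by rewrite (val_inj ba) eqxx LQ_diag subrr.
by rewrite LQ_lower // rmorph0 subr0 -val_eqE /= gtn_eqF.
Qed.

End MatrixAlgebra.

Section Perturbation.
Variables (R : realType) (n : nat) (nu : 'cV[R[i]]_n -> R).
Hypotheses (nu_norm : vector_norm nu) (n_gt0 : (0 < n)%N).

(* In [mu nu(x) <= Kg (Kb nu(x) + nu(y))], the condition [Kg Kb <= mu / 2] absorbs the
   [nu(x)] term of the right-hand side. *)
Lemma invmx_opbound (P G B : 'M[R[i]]_n) (mu Kg Kb : R) :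
  P \in unitmx -> P = B - (mu%:C)%C *: G ->
  (forall x, nu x <= Kg * nu (G *m x)) -> opbound nu nu B Kb ->
  0 < mu -> 0 <= Kg -> 0 <= Kb -> 2 * Kg * Kb <= mu ->
  opbound nu nu (invmx P) (2 * Kg / mu).
Proof.
move=> Pu PBG G_lower hB mu0 Kg0 Kb0 large_mu y; set x := invmx P *m y.
have Px : P *m x = y by rewrite /x mulmxA mulmxV // mul1mx.
have muGx : (mu%:C)%C *: (G *m x) = B *m x - y.
  by rewrite -Px PBG mulmxBl opprB addrC subrK scalemxAl.
have muGx_le : mu * nu (G *m x) <= Kb * nu x + nu y.
  rewrite -[mu](ger0_norm (ltW mu0)) -(vnormZr nu_norm) muGx.
  by apply: le_trans (vnormD nu_norm _ _) _; rewrite vnormN // lerD.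
have mux_le : mu * nu x <= Kg * (Kb * nu x + nu y).
  apply: le_trans (_ : mu * (Kg * nu (G *m x)) <= _); first exact/ler_wpM2l/G_lower/ltW.
  by rewrite mulrCA ler_wpM2l.
have := vnorm_ge0 nu_norm x; have := vnorm_ge0 nu_norm y.
by rewrite mulrAC ler_pdivlMr //; nra.
Qed.

Lemma mxpow_perturb_opbound (X : 'M[R[i]]_n) (d : R) : 0 <= d -> forall k,
  exists2 dk, 0 <= dk & forall (mu : R) (S : 'M[R[i]]_n), 1 <= mu ->
    opbound nu nu (S - X) (d / mu) -> opbound nu nu (mxpow S k - mxpow X k) (dk / mu).
Proof.
move=> d0; elim=> [|k [dk dk0 IHk]].
  by exists 0 => // mu S _ _; rewrite subrr mul0r; exact: opbound0.
have [Kx Kx0 hX] := exists_opbound nu_norm nu_norm X n_gt0.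
have [Kk Kk0 hXk] := exists_opbound nu_norm nu_norm (mxpow X k) n_gt0.
exists (d * dk + d * Kk + Kx * dk); first by rewrite !addr_ge0 ?mulr_ge0.
move=> mu S mu1 hS; have mu0 : 0 < mu by lra.
have hSk := IHk mu S mu1 hS.
set D := S - X in hS hSk *; set Dk := mxpow S k - mxpow X k in hSk *.
have -> : mxpow S k.+1 - mxpow X k.+1 = D *m Dk + D *m mxpow X k + X *m Dk.
  have eS : S = D + X by rewrite /D subrK.
  have eSk : mxpow S k = Dk + mxpow X k by rewrite /Dk subrK.
  by rewrite !mxpowS eSk {1}eS mulmxDl !mulmxDr !addrA addrK.
have dmu0 : 0 <= d / mu := divr_ge0 d0 (ltW mu0).
apply: (opbound_le nu_norm _ (opboundD nu_norm (opboundD nu_norm (opboundM dmu0 hS hSk)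
  (opboundM dmu0 hS hXk)) (opboundM Kx0 hX hSk))).
rewrite !mulrDl; apply: lerD; first apply: lerD.
- rewrite !mulrA [d / mu * dk]mulrAC; apply: ler_piMr; last by rewrite invf_le1.
  exact/divr_ge0/ltW/mu0/mulr_ge0.
- by rewrite mulrAC.
- by rewrite mulrA.
Qed.

End Perturbation.

Section PFASSTBounds.
Variables (R : realType) (L M N Mt Nt : nat).
Variables (Q QD : 'M[R]_M) (QtD : 'M[R]_Mt) (A : 'M[R[i]]_N) (At : 'M[R[i]]_Nt).
Variables (TFCQ : 'M[R]_(Mt, M)) (TFCA : 'M[R]_(Nt, N)).
Variables (TCFQ : 'M[R]_(M, Mt)) (TCFA : 'M[R]_(N, Nt)).
Hypotheses (L_gt0 : (0 < L)%N) (M_gt0 : (0 < M)%N) (N_gt0 : (0 < N)%N).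
Hypotheses (Mt_gt0 : (0 < Mt)%N) (Nt_gt0 : (0 < Nt)%N).
Hypotheses (QDu : QD \in unitmx) (QtDu : QtD \in unitmx).
Hypotheses (Au : A \in unitmx) (Atu : At \in unitmx).
Hypothesis P_unit : forall mu : R, 0 < mu ->
  Phat L QD A mu \in unitmx /\ Ptilde L QtD At mu \in unitmx.
Variable nu : 'cV[R[i]]_(L * (M * N)) -> R.
Hypothesis nu_norm : vector_norm nu.

Local Notation I_L := (1%:M : 'M[R[i]]_L).
Local Notation G := (I_L *t (cmx QD *t A)).
Local Notation Gq := (I_L *t (cmx Q *t A)).
Local Notation Gt := (I_L *t (cmx QtD *t At)).
Local Notation EH := (subdiagE R L *t Hmat R M N).
Local Notation EHt := (subdiagE R L *t Hmat R Mt Nt).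
Local Notation X := (I_L *t ((1%:M - cmx (invmx QD *m Q)) *t (1%:M : 'M[R[i]]_N))).
Local Notation smoother mu := (1%:M - invmx (Phat L QD A mu) *m Cmat L Q A mu).
Local Notation coarse mu := (1%:M - TCF L TCFQ TCFA *m invmx (Ptilde L QtD At mu)
  *m TFC L TFCQ TFCA *m Cmat L Q A mu).
Local Notation nut := (@l1norm R (L * (Mt * Nt))).

Let n_gt0 : (0 < L * (M * N))%N. Proof. by rewrite !muln_gt0 L_gt0 M_gt0 N_gt0. Qed.
Let nt_gt0 : (0 < L * (Mt * Nt))%N. Proof. by rewrite !muln_gt0 L_gt0 Mt_gt0 Nt_gt0. Qed.
Let nut_norm : vector_norm nut := @l1norm_vector_norm R _.

Lemma mulmx_G_X : G *m X = G - Gq.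
Proof.
rewrite !tensmx_mul mul1mx mulmx1 mulmxBr mulmx1 -cmxM mulmxA mulmxV // mul1mx.
by rewrite tensmxBl tensmxBr.
Qed.

Lemma smoother_decomp mu : Phat L QD A mu \in unitmx ->
  smoother mu = X + invmx (Phat L QD A mu) *m (EH - X).
Proof.
move=> Pu; set P := Phat L QD A mu.
have PX : P *m X = X - (mu%:C)%C *: (G - Gq) by rewrite mulmxBl mul1mx -scalemxAl mulmx_G_X.
have -> : Cmat L Q A mu = P - (P *m X + (EH - X)).
  rewrite PX /Cmat /P /Phat scalerBr.
  move: X EH ((mu%:C)%C *: Gq) ((mu%:C)%C *: G) (1%:M : 'M[R[i]]_(L * (M * N))) => x e q g o.
  by rewrite [x - _ + _]addrC addrA subrK [- (e - _)]opprB !addrA subrK.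
by rewrite mulmxBr mulVmx // mulmxDr mulKmx // opprB addrC subrK.
Qed.

Lemma Phat_inv_near : exists2 K, 0 <= K &
  \forall mu \near +oo, opbound nu nu (invmx (Phat L QD A mu)) (K / mu).
Proof.
have [Kg Kg0 G_lower] := vnorm_le_mulmx_linv nu_norm nu_norm n_gt0 (tens_cmx_mulVmx L QDu Au).
exists (2 * Kg); first lra.
near=> mu.
have mu_large : 1 + 2 * Kg <= mu by near: mu; apply: nbhs_pinfty_ge; rewrite num_real.
have mu0 : 0 < mu by lra.
by apply: (invmx_opbound nu_norm (P_unit mu0).1 erefl G_lower (opbound1 nu)); lra.
Unshelve. all: by end_near. Qed.

Lemma Ptilde_inv_near : exists2 K, 0 <= K &
  \forall mu \near +oo, opbound nut nut (invmx (Ptilde L QtD At mu)) (K / mu).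
Proof.
have [Kg Kg0 G_lower] :=
  vnorm_le_mulmx_linv nut_norm nut_norm nt_gt0 (tens_cmx_mulVmx L QtDu Atu).
have [Kb Kb0 hB] := exists_opbound nut_norm nut_norm (1%:M - EHt) nt_gt0.
exists (2 * Kg); first lra.
near=> mu.
have mu_large : 1 + 2 * Kg * Kb <= mu by near: mu; apply: nbhs_pinfty_ge; rewrite num_real.
have mu0 : 0 < mu by nra.
apply: (invmx_opbound nut_norm (P_unit mu0).2 _ G_lower hB mu0 Kg0 Kb0).
  by rewrite /Ptilde addrAC.
lra.
Unshelve. all: by end_near. Qed.

Lemma smoother_near : exists2 d, 0 <= d &
  \forall mu \near +oo, opbound nu nu (smoother mu - X) (d / mu).
Proof.
have [K K0 hP] := Phat_inv_near.
have [Kz Kz0 hZ] := exists_opbound nu_norm nu_norm (EH - X) n_gt0.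
exists (K * Kz); first exact: mulr_ge0.
near=> mu; have mu0 : 0 < mu by near: mu; apply: nbhs_pinfty_gt; rewrite num_real.
rewrite smoother_decomp ?(P_unit mu0).1 // addrC addKr mulrAC.
apply: opboundM (divr_ge0 K0 (ltW mu0)) _ hZ; near: mu; exact: hP.
Unshelve. all: by end_near. Qed.

Lemma smoother_pow_near k : exists2 dk, 0 <= dk &
  \forall mu \near +oo, opbound nu nu (mxpow (smoother mu) k - mxpow X k) (dk / mu).
Proof.
have [d d0 hS] := smoother_near.
have [dk dk0 hSk] := mxpow_perturb_opbound nu_norm n_gt0 X d0 k.
exists dk => //; near=> mu; apply: hSk.
  by near: mu; apply: nbhs_pinfty_ge; rewrite num_real.
by near: mu; exact: hS.
Unshelve. all: by end_near. Qed.

Lemma coarse_near : exists2 K, 0 < K & \forall mu \near +oo, opbound nu nu (coarse mu) K.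
Proof.
have [Kp Kp0 hP] := Ptilde_inv_near.
have [Ki Ki0 hTCF] := exists_opbound nu_norm nut_norm (TCF L TCFQ TCFA) nt_gt0.
have [Kr Kr0 hTFC] := exists_opbound nut_norm nu_norm (TFC L TFCQ TFCA) n_gt0.
have [Kq Kq0 hGq] := exists_opbound nu_norm nu_norm Gq n_gt0.
have [Ke Ke0 hEH] := exists_opbound nu_norm nu_norm EH n_gt0.
set a := Ki * Kp * Kr; have a0 : 0 <= a by rewrite !mulr_ge0.
exists (1 + a * (1 + Kq + Ke)); first by rewrite ltr_pwDl ?mulr_ge0 ?addr_ge0.
near=> mu; have mu1 : 1 <= mu by near: mu; apply: nbhs_pinfty_ge; rewrite num_real.
have mu0 : 0 < mu by lra.
have hC : opbound nu nu (Cmat L Q A mu) (1 + mu * Kq + Ke).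
  rewrite /Cmat -{2}(ger0_norm (ltW mu0)).
  exact: (opboundB nu_norm (opboundB nu_norm (opbound1 _) (opboundZr nu_norm _ hGq)) hEH).
apply: (opboundB nu_norm (opbound1 _)).
have Kp_mu0 : 0 <= Kp / mu := divr_ge0 Kp0 (ltW mu0).
have hPt : opbound nut nut (invmx (Ptilde L QtD At mu)) (Kp / mu) by near: mu.
have a1 : 0 <= Ki * (Kp / mu) := mulr_ge0 Ki0 Kp_mu0.
have a2 : 0 <= Ki * (Kp / mu) * Kr := mulr_ge0 a1 Kr0.
apply: (opbound_le nu_norm _ (opboundM a2 (opboundM a1 (opboundM Ki0 hTCF hPt) hTFC) hC)).
have -> : Ki * (Kp / mu) * Kr * (1 + mu * Kq + Ke) = a * ((1 + mu * Kq + Ke) / mu).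
  by rewrite /a; field; rewrite gt_eqF.
rewrite ler_wpM2l // ler_pdivrMr //; nra.
Unshelve. all: by end_near. Qed.

Lemma pfasst_opnorm_near k : exists2 c, 0 < c & exists2 c', 0 <= c' &
  \forall mu \near +oo,
    opnorm nu (T_PFASST L Q QD A QtD At TFCQ TFCA TCFQ TCFA mu k)
    <= c * opnorm nu (mxpow X k) + c' / mu.
Proof.
have [K K0 hCC] := coarse_near; have [dk dk0 hSk] := smoother_pow_near k.
exists K => //; exists (K * dk); first exact: mulr_ge0 (ltW K0) dk0.
near=> mu; have mu0 : 0 < mu by near: mu; apply: nbhs_pinfty_gt; rewrite num_real.
have opX := opbound_opnorm nu_norm n_gt0 (mxpow X k).
apply: (opnorm_le_opbound nu_norm n_gt0).
  exact: addr_ge0 (mulr_ge0 (ltW K0) (opnorm_ge0 _ _ _))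
    (divr_ge0 (mulr_ge0 (ltW K0) dk0) (ltW mu0)).
have hT : opbound nu nu (coarse mu *m mxpow (smoother mu) k)
    (K * (opnorm nu (mxpow X k) + dk / mu)).
  apply: (opboundM (nuq := nu) (ltW K0)); first by near: mu.
  rewrite -[mxpow (smoother mu) k](subrK (mxpow X k)) addrC.
  by apply: (opboundD nu_norm opX); near: mu.
by apply: (opbound_le nu_norm _ hT); rewrite mulrDr mulrA.
Unshelve. all: by end_near. Qed.

End PFASSTBounds.

Theorem theorem4 (R : realType) (L M N Mt Nt : nat)
  (tau : 'I_M -> R) (QD : 'M[R]_M) (QtD : 'M[R]_Mt)
  (A : 'M[R[i]]_N) (At : 'M[R[i]]_Nt)
  (TFCQ : 'M[R]_(Mt, M)) (TFCA : 'M[R]_(Nt, N))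
  (TCFQ : 'M[R]_(M, Mt)) (TCFA : 'M[R]_(N, Nt)) :
  (0 < L)%N -> (0 < M)%N -> (0 < N)%N ->
  (0 < Mt)%N -> (Mt <= M)%N -> (0 < Nt)%N -> (Nt <= N)%N ->
  right_radau_nodes tau ->
  LU_trick (collocQ tau) QD ->
  lower_triangular QtD -> QtD \in unitmx ->
  A \in unitmx -> At \in unitmx ->
  (subdiagE R L *t Hmat R Mt Nt) *m TFC L TFCQ TFCA
    = TFC L TFCQ TFCA *m (subdiagE R L *t Hmat R M N) ->
  (forall mu : R, 0 < mu ->
     Phat L QD A mu \in unitmx /\ Ptilde L QtD At mu \in unitmx) ->
  forall (k : nat) (nu : 'cV[R[i]]_(L * (M * N)) -> R),
  vector_norm nu ->
  (exists (c c' mustar : R),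
     [/\ 0 < c, 0 <= c', 0 < mustar &
      forall mu : R, mustar <= mu ->
        opnorm nu (T_PFASST L (collocQ tau) QD A QtD At
                              TFCQ TFCA TCFQ TCFA mu k)
        <= c * opnorm nu ((1%:M : 'M[R[i]]_L) *t
               (mxpow (1%:M - cmx (invmx QD *m collocQ tau)) k
                *t (1%:M : 'M[R[i]]_N)))
           + c' / mu])
  /\ ((M <= k)%N ->
      opnorm nu (T_PFASST L (collocQ tau) QD A QtD At
                          TFCQ TFCA TCFQ TCFA mu k) @[mu --> +oo] --> 0).
Proof.
move=> L_gt0 M_gt0 N_gt0 Mt_gt0 _ Nt_gt0 _ [tau_incr tau_gt0 _ _] LU _ QtDu Au Atu _ P_unit
  k nu nu_norm.
have tau_neq0 i : tau i != 0 by rewrite gt_eqF.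
have QDu := LU_trick_unit LU (collocQ_unit (incr_inj tau_incr) tau_neq0).
have [c c0 [c' c'0 T_near]] := pfasst_opnorm_near (collocQ tau) TFCQ TFCA TCFQ TCFA
  L_gt0 M_gt0 N_gt0 Mt_gt0 Nt_gt0 QDu QtDu Au Atu P_unit nu_norm k.
rewrite mxpow_tens1 in T_near; split.
  have [m [_ T_bound]] := T_near.
  exists c, c', (`|m| + 1); split => // mu m_mu.
  by apply: T_bound; have := ler_norm m; lra.
move=> Mk; rewrite LU_trick_mxpow_eq0 // tens0mx tensmx0 in T_near.
apply: (cvgy0_le_inv (K := c')).
have n_gt0 : (0 < L * (M * N))%N by rewrite !muln_gt0 L_gt0 M_gt0 N_gt0.
apply: filterS T_near => mu; rewrite opnorm0 // mulr0 add0r => ->.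
by rewrite (opnorm_ge0 nu_norm n_gt0).
Qed.
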